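(* Let $R$ be a lattice diagram of a knot or link. (1) If two problem crossings of $R$ are adjacent in the crossing graph $C(R)$ but are not adjacent in the problem crossing graph $PC(R)$, then neither is a bad neighbor of the other, and they have the same crossing type. (2) If $R$ does not have a Celtic configuration, then $PC(R)$ has every vertex of degree at most $2$, is deleted-square free, and every connected component of $PC(R)$ that is a cycle has a vertex that is not a corner of $PC(R)$.
   Context: A lattice diagram of a knot or link is a knot or link diagram (with over/under information at finitely many transverse double points, the crossings) contained in the $\mathbb{Z}^2$ lattice (vertices the integer points, edges the unit segments parallel to the axes) with all crossings at lattice vertices. At a crossing $c$, the $x$-strand (resp. $y$-strand) is the union of the two horizontal (resp. vertical) lattice edges of $R$ with endpoint $c$; $c$ is an $x$-crossing (resp. $y$-crossing) if the over-strand is the $x$-strand (resp. $y$-strand); this is its crossing type. The crossing graph $C(R)$ is the subgraph of the $\mathbb{Z}^2$ lattice with a vertex at each crossing of $R$ and an edge between any two crossings at lattice distance $1$. In a subgraph $G$ of the $\mathbb{Z}^2$ lattice, two vertices are adjacent if joined by an edge of $G$; two neighbors $a,b$ of a vertex $v$ are nearby neighbors if edges $va$, $vb$ are perpendicular and opposing neighbors if parallel; $v$ is a corner of $G$ if it has exactly two neighbors in $G$ and they are nearby neighbors; $G$ is deleted-square free if it does not contain three edges of a single unit square of the $\mathbb{Z}^2$ lattice. A crossing $c$ is a problem crossing if it has a pair of nearby neighbors in $C(R)$ both of crossing type opposite to that of $c$; any crossing in such a pair is a bad neighbor of $c$. The problem crossing graph $PC(R)$ is the subgraph of $C(R)$ whose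 vertices are the problem crossings and with an edge between two problem crossings that are bad neighbors of each other. A Celtic configuration is a set of four crossings at the four vertices of a unit square of the $\mathbb{Z}^2$ lattice such that any two of them joined by a side of the square have opposite crossing types. *)

From Stdlib Require Import ZArith Lia.
Open Scope Z_scope.

Definition pt := (Z * Z)%type.
Definition padd (p q : pt) : pt := (fst p + fst q, snd p + snd q).

(* A lattice diagram: a finite set of unit lattice edges (hedge p = the
   horizontal edge from p to p+(1,0), vedge p = the vertical edge from p to
   p+(0,1)), every lattice vertex having degree 0, 2 or 4 (the diagram is a
   union of closed lattice curves; degree-4 vertices are exactly the
   crossings, i.e. transverse double points), together with crossing
   information: xover c = true iff the over-strand at c is the x-strand
   (meaningful only at crossings). *)
Definition edge_right (h : pt -> bool) (p : pt) := h p.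
Definition edge_left (h : pt -> bool) (p : pt) := h (fst p - 1, snd p).
Definition edge_up (v : pt -> bool) (p : pt) := v p.
Definition edge_down (v : pt -> bool) (p : pt) := v (fst p, snd p - 1).

Definition vdeg (h v : pt -> bool) (p : pt) : nat :=
  (Nat.b2n (edge_right h p) + Nat.b2n (edge_left h p)
   + Nat.b2n (edge_up v p) + Nat.b2n (edge_down v p))%nat.

Record lattice_diagram := {
  hedge : pt -> bool;
  vedge : pt -> bool;
  xover : pt -> bool;
  ld_finite : exists N : Z, forall p : pt, (hedge p = true \/ vedge p = true) ->
      Z.abs (fst p) <= N /\ Z.abs (snd p) <= N;
  ld_nonempty : exists p : pt, hedge p = true \/ vedge p = true;
  ld_degree : forall p : pt, vdeg hedge vedge p = 0%nat \/
      vdeg hedge vedge p = 2%nat \/ vdeg hedge vedge p = 4%nat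
}.

Definition crossing (R : lattice_diagram) (c : pt) : Prop :=
  vdeg (hedge R) (vedge R) c = 4%nat.

Definition opp_type (R : lattice_diagram) (a b : pt) : Prop :=
  xover R a <> xover R b.

Definition unit_vec (d : pt) : Prop :=
  d = (1, 0) \/ d = (0, 1) \/ d = (-1, 0) \/ d = (0, -1).
Definition perp (d1 d2 : pt) : Prop := fst d1 * fst d2 + snd d1 * snd d2 = 0.

Definition cadj (R : lattice_diagram) (a b : pt) : Prop :=
  crossing R a /\ crossing R b /\ exists d, unit_vec d /\ b = padd a d.

Definition bad_pair (R : lattice_diagram) (c b1 b2 : pt) : Prop :=
  exists d1 d2, unit_vec d1 /\ unit_vec d2 /\ perp d1 d2 /\
    b1 = padd c d1 /\ b2 = padd c d2 /\
    cadj R c b1 /\ cadj R c b2 /\ opp_type R c b1 /\ opp_type R c b2.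

Definition problem (R : lattice_diagram) (c : pt) : Prop :=
  crossing R c /\ exists b1 b2, bad_pair R c b1 b2.

Definition bad_nbr (R : lattice_diagram) (c b : pt) : Prop :=
  problem R c /\ exists b', bad_pair R c b b' \/ bad_pair R c b' b.

Definition pcadj (R : lattice_diagram) (a b : pt) : Prop :=
  problem R a /\ problem R b /\ bad_nbr R a b /\ bad_nbr R b a.

Definition celtic (R : lattice_diagram) : Prop :=
  exists p : pt,
    let p1 := padd p (1, 0) in let p2 := padd p (1, 1) in
    let p3 := padd p (0, 1) in
    crossing R p /\ crossing R p1 /\ crossing R p2 /\ crossing R p3 /\
    opp_type R p p1 /\ opp_type R p1 p2 /\ opp_type R p2 p3 /\ opp_type R p3 p.

Definition pc_maxdeg2 (R : lattice_diagram) : Prop :=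
  forall v u1 u2 u3, pcadj R v u1 -> pcadj R v u2 -> pcadj R v u3 ->
    u1 = u2 \/ u1 = u3 \/ u2 = u3.

Definition pc_deleted_square_free (R : lattice_diagram) : Prop :=
  forall p : pt,
    let a := p in let b := padd p (1, 0) in let c := padd p (1, 1) in
    let d := padd p (0, 1) in
    ~ ((pcadj R a b /\ pcadj R b c /\ pcadj R c d) \/
       (pcadj R b c /\ pcadj R c d /\ pcadj R d a) \/
       (pcadj R c d /\ pcadj R d a /\ pcadj R a b) \/
       (pcadj R d a /\ pcadj R a b /\ pcadj R b c)).

Definition pc_corner (R : lattice_diagram) (v : pt) : Prop :=
  exists d1 d2, unit_vec d1 /\ unit_vec d2 /\ perp d1 d2 /\
    pcadj R v (padd v d1) /\ pcadj R v (padd v d2) /\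
    forall w, pcadj R v w -> w = padd v d1 \/ w = padd v d2.

(* f 0, ..., f (k-1) are the (distinct) vertices of a connected component of
   PC(R) which is a cycle graph (with edges f i -- f ((i+1) mod k)). *)
Definition pc_cycle_component (R : lattice_diagram) (k : nat) (f : nat -> pt)
  : Prop :=
  (3 <= k)%nat /\
  (forall i j, (i < k)%nat -> (j < k)%nat -> f i = f j -> i = j) /\
  (forall i, (i < k)%nat -> problem R (f i)) /\
  (forall i, (i < k)%nat -> pcadj R (f i) (f (Nat.modulo (S i) k))) /\
  (forall i w, (i < k)%nat -> pcadj R (f i) w -> exists j, (j < k)%nat /\ w = f j) /\
  (forall i j, (i < k)%nat -> (j < k)%nat -> pcadj R (f i) (f j) ->
     j = Nat.modulo (S i) k \/ i = Nat.modulo (S j) k).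

From Stdlib Require Import ZArith Lia Classical.
Open Scope Z_scope.

(* A problem crossing has bad neighbors in two perpendicular directions, and
   every unit direction is perpendicular to one of these.  Hence every
   C(R)-neighbor of opposite type of a problem crossing is one of its bad
   neighbors, which gives (1).  For (2): in a unit square of crossings, if
   three consecutive sides join crossings of opposite type then so does the
   fourth, and the square is a Celtic configuration.  A vertex of degree three
   in PC(R), three edges of a unit square in PC(R), or two adjacent corners of
   PC(R) turning the same way each yield such a square.  So a cycle of corners
   would have to turn alternately, i.e. move along diagonal staircases, and
   then no vertex of it could maximise 2x + y. *)

Definition pneg (d : pt) : pt := (- fst d, - snd d).

Ltac destruct_unit_vecs :=
  repeat match goal with
  | H : unit_vec _ |- _ => unfold unit_vec in H; destruct H as [-> | [-> | [-> | ->]]]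
  end.

Lemma perp_sym d e : perp d e -> perp e d.
Proof. unfold perp; nia. Qed.

Lemma perp_pneg_r d e : perp d e -> perp d (pneg e).
Proof. unfold perp, pneg; cbn; nia. Qed.

Lemma unit_vec_pneg d : unit_vec d -> unit_vec (pneg d).
Proof. intros Ud; destruct_unit_vecs; cbv; tauto. Qed.

Lemma perp_cases d1 d2 e : unit_vec d1 -> unit_vec d2 -> unit_vec e -> perp d1 d2 ->
  perp e d1 \/ perp e d2.
Proof. intros; destruct_unit_vecs; unfold perp in *; cbn in *; lia. Qed.

Lemma perp_unit_cases a d e : unit_vec a -> unit_vec d -> unit_vec e ->
  perp a e -> perp d e -> a = d \/ a = pneg d.
Proof.
  intros; destruct_unit_vecs; cbv in *;
    first [discriminate | left; reflexivity | right; reflexivity].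
Qed.

Lemma padd_inj u a b : padd u a = padd u b -> a = b.
Proof.
  destruct u, a, b; unfold padd; cbn; intros E; injection E; intros; f_equal; lia.
Qed.

Lemma padd_pneg u a : padd (padd u a) (pneg a) = u.
Proof. destruct u, a; unfold padd, pneg; cbn; f_equal; lia. Qed.

Lemma opp_type_sym R a b : opp_type R a b -> opp_type R b a.
Proof. unfold opp_type; congruence. Qed.

Lemma cadj_sym R a b : cadj R a b -> cadj R b a.
Proof.
  intros (Ca & Cb & d & Ud & ->); split; [exact Cb | split; [exact Ca |]].
  exists (pneg d); split; [apply unit_vec_pneg; exact Ud | symmetry; apply padd_pneg].
Qed.

Lemma problem_perp_bad_dir R c e : problem R c -> unit_vec e ->
  exists a, unit_vec a /\ perp e a /\ cadj R c (padd c a) /\ opp_type R c (padd c a).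
Proof.
  intros [_ (b1 & b2 & d1 & d2 & U1 & U2 & P12 & -> & -> & A1 & A2 & O1 & O2)] Ue.
  destruct (perp_cases d1 d2 e U1 U2 Ue P12) as [P | P].
  - exists d1; auto.
  - exists d2; auto.
Qed.

Lemma bad_nbr_of_opp_type R c b : problem R c -> cadj R c b -> opp_type R c b ->
  bad_nbr R c b.
Proof.
  intros Pc Ccb Ocb; split; [exact Pc |].
  pose proof Ccb as (_ & _ & d & Ud & ->).
  destruct (problem_perp_bad_dir R c d Pc Ud) as (a & Ua & Pda & Cca & Oca).
  exists (padd c a); left; exists d, a; intuition.
Qed.

Lemma bad_nbr_cadj_opp R c b : bad_nbr R c b -> cadj R c b /\ opp_type R c b.
Proof.
  intros [_ [b' [H | H]]]; destruct H as (d1 & d2 & H); tauto.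
Qed.

Lemma pcadj_sym R a b : pcadj R a b -> pcadj R b a.
Proof. unfold pcadj; tauto. Qed.

Lemma pcadj_cadj_opp R a b : pcadj R a b -> cadj R a b /\ opp_type R a b.
Proof. intros (_ & _ & H & _); exact (bad_nbr_cadj_opp R a b H). Qed.

Lemma pcadj_crossing_opp R a b : pcadj R a b ->
  crossing R a /\ crossing R b /\ opp_type R a b.
Proof. intros H; destruct (pcadj_cadj_opp R a b H) as ((Ca & Cb & _) & O); auto. Qed.

Lemma pcadj_of_opp_type R a b : problem R a -> problem R b -> cadj R a b ->
  opp_type R a b -> pcadj R a b.
Proof.
  intros Pa Pb Cab Oab; split; [exact Pa | split; [exact Pb | split]].
  - exact (bad_nbr_of_opp_type R a b Pa Cab Oab).
  - exact (bad_nbr_of_opp_type R b a Pb (cadj_sym R a b Cab) (opp_type_sym R a b Oab)).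
Qed.

Lemma cadj_not_pcadj R a b : problem R a -> problem R b -> cadj R a b ->
  ~ pcadj R a b -> ~ bad_nbr R a b /\ ~ bad_nbr R b a /\ xover R a = xover R b.
Proof.
  intros Pa Pb Cab Nab.
  assert (Nopp : ~ opp_type R a b) by (intros O; exact (Nab (pcadj_of_opp_type R a b Pa Pb Cab O))).
  split; [| split].
  - intros H; exact (Nopp (proj2 (bad_nbr_cadj_opp R a b H))).
  - intros H; exact (Nopp (opp_type_sym R b a (proj2 (bad_nbr_cadj_opp R b a H)))).
  - destruct (Bool.bool_dec (xover R a) (xover R b)) as [E | E]; [exact E | contradiction].
Qed.

Definition alternating_square R (q0 q1 q2 q3 : pt) : Prop :=
  crossing R q0 /\ crossing R q1 /\ crossing R q2 /\ crossing R q3 /\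
  opp_type R q0 q1 /\ opp_type R q1 q2 /\ opp_type R q2 q3 /\ opp_type R q3 q0.

Lemma alternating_square_rot R q0 q1 q2 q3 :
  alternating_square R q0 q1 q2 q3 -> alternating_square R q1 q2 q3 q0.
Proof. unfold alternating_square; tauto. Qed.

Lemma alternating_square_rev R q0 q1 q2 q3 :
  alternating_square R q0 q1 q2 q3 -> alternating_square R q3 q2 q1 q0.
Proof. unfold alternating_square; intuition auto using opp_type_sym. Qed.

Lemma opp_type_close R a b c d :
  opp_type R a b -> opp_type R b c -> opp_type R c d -> opp_type R d a.
Proof.
  unfold opp_type; destruct (xover R a), (xover R b), (xover R c), (xover R d); congruence.
Qed.

Lemma alternating_square_of_path R q0 q1 q2 q3 :
  crossing R q0 -> crossing R q1 -> crossing R q2 -> crossing R q3 ->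
  opp_type R q0 q1 -> opp_type R q1 q2 -> opp_type R q2 q3 ->
  alternating_square R q0 q1 q2 q3.
Proof. repeat split; eauto using opp_type_close. Qed.

Lemma alternating_square_of_pcadj_path R q0 q1 q2 q3 :
  pcadj R q0 q1 -> pcadj R q1 q2 -> pcadj R q2 q3 -> alternating_square R q0 q1 q2 q3.
Proof.
  intros H1 H2 H3.
  destruct (pcadj_crossing_opp R _ _ H1) as (C0 & C1 & O1).
  destruct (pcadj_crossing_opp R _ _ H2) as (_ & C2 & O2).
  destruct (pcadj_crossing_opp R _ _ H3) as (_ & C3 & O3).
  apply alternating_square_of_path; assumption.
Qed.

Lemma celtic_of_unit_square R q0 q1 q2 q3 :
  q1 = padd q0 (1, 0) -> q2 = padd q0 (1, 1) -> q3 = padd q0 (0, 1) ->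
  alternating_square R q0 q1 q2 q3 -> celtic R.
Proof. intros -> -> -> H; exists q0; exact H. Qed.

Ltac pt_eq := unfold padd; cbn; f_equal; lia.

(* One of the eight rotations and reflections of the square lists it
   counterclockwise from its lower-left corner. *)
Lemma celtic_of_alternating_square R v d e : unit_vec d -> unit_vec e -> perp d e ->
  alternating_square R v (padd v d) (padd (padd v d) e) (padd v e) -> celtic R.
Proof.
  intros Ud Ue Pde Hsq.
  pose proof (alternating_square_rot _ _ _ _ _ Hsq) as Hsq1.
  pose proof (alternating_square_rot _ _ _ _ _ Hsq1) as Hsq2.
  pose proof (alternating_square_rot _ _ _ _ _ Hsq2) as Hsq3.
  pose proof (alternating_square_rev _ _ _ _ _ Hsq) as Hrev.
  pose proof (alternating_square_rot _ _ _ _ _ Hrev) as Hrev1.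
  pose proof (alternating_square_rot _ _ _ _ _ Hrev1) as Hrev2.
  pose proof (alternating_square_rot _ _ _ _ _ Hrev2) as Hrev3.
  destruct v as [x y]; destruct_unit_vecs; try (cbv in Pde; discriminate);
  match goal with
  | H : alternating_square R ?q0 ?q1 ?q2 ?q3 |- _ =>
      apply (celtic_of_unit_square R q0 q1 q2 q3); [pt_eq | pt_eq | pt_eq | exact H]
  end.
Qed.

Lemma celtic_of_three_sides R v d e : unit_vec d -> unit_vec e -> perp d e ->
  crossing R v -> crossing R (padd v d) -> crossing R (padd v e) ->
  crossing R (padd (padd v d) e) ->
  opp_type R v (padd v d) -> opp_type R v (padd v e) ->
  opp_type R (padd v d) (padd (padd v d) e) -> celtic R.
Proof.
  intros Ud Ue Pde C0 Cd Ce Cde Od Oe Ode.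
  apply (celtic_of_alternating_square R v d e Ud Ue Pde), alternating_square_rot.
  apply alternating_square_of_path; auto using opp_type_sym.
Qed.

Lemma pcadj_T_celtic R v d e : unit_vec d -> unit_vec e -> perp d e ->
  pcadj R v (padd v e) -> pcadj R v (padd v d) -> pcadj R v (padd v (pneg d)) ->
  celtic R.
Proof.
  intros Ud Ue Pde He Hd Hd'.
  destruct (pcadj_crossing_opp R _ _ He) as (Cv & Ce & Oe).
  destruct He as (_ & Pe & _).
  destruct (problem_perp_bad_dir R _ e Pe Ue) as (a & Ua & Pea & (_ & Cea & _) & Oea).
  destruct (perp_unit_cases a d e Ua Ud Ue (perp_sym _ _ Pea) Pde) as [-> | ->].
  - destruct (pcadj_crossing_opp R _ _ Hd) as (_ & Cd & Od).
    exact (celtic_of_three_sides R v e d Ue Ud (perp_sym _ _ Pde) Cv Ce Cd Cea Oe Od Oea).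
  - destruct (pcadj_crossing_opp R _ _ Hd') as (_ & Cd & Od).
    exact (celtic_of_three_sides R v e (pneg d) Ue (unit_vec_pneg d Ud)
             (perp_pneg_r _ _ (perp_sym _ _ Pde)) Cv Ce Cd Cea Oe Od Oea).
Qed.

Lemma pc_maxdeg2_of_not_celtic R : ~ celtic R -> pc_maxdeg2 R.
Proof.
  intros Nc v u1 u2 u3 H1 H2 H3.
  destruct (pcadj_cadj_opp R _ _ H1) as ((_ & _ & d1 & U1 & ->) & _).
  destruct (pcadj_cadj_opp R _ _ H2) as ((_ & _ & d2 & U2 & ->) & _).
  destruct (pcadj_cadj_opp R _ _ H3) as ((_ & _ & d3 & U3 & ->) & _).
  destruct_unit_vecs;
    first [ left; reflexivity | right; left; reflexivity | right; right; reflexivity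
          | exfalso; apply Nc;
            match goal with
            | He : pcadj R v (padd v ?e), Hd : pcadj R v (padd v ?d),
              Hd' : pcadj R v (padd v _) |- _ =>
                apply (pcadj_T_celtic R v d e);
                  [ hnf; tauto | hnf; tauto | reflexivity | exact He | exact Hd | exact Hd' ]
            end ].
Qed.

Lemma pc_deleted_square_free_of_not_celtic R : ~ celtic R -> pc_deleted_square_free R.
Proof.
  intros Nc p; cbv zeta; intros Hsq; apply Nc; exists p.
  destruct Hsq as [(H1 & H2 & H3) | [(H1 & H2 & H3) | [(H1 & H2 & H3) | (H1 & H2 & H3)]]];
    pose proof (alternating_square_of_pcadj_path R _ _ _ _ H1 H2 H3) as Hs;
    repeat first [exact Hs | apply alternating_square_rot in Hs].
Qed.

Lemma pc_corner_perp_nbr R u c : pc_corner R u -> pcadj R u (padd u c) ->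
  exists b, unit_vec b /\ perp c b /\ pcadj R u (padd u b).
Proof.
  intros (a & b & Ua & Ub & Pab & Ha & Hb & Hall) Hc.
  destruct (Hall _ Hc) as [E | E]; apply padd_inj in E; subst c.
  - exists b; auto.
  - exists a; auto using perp_sym.
Qed.

(* Turning the same way at two adjacent corners would close three sides of a
   unit square. *)
Lemma pc_corner_stair R v d1 d2 : ~ celtic R -> unit_vec d1 -> unit_vec d2 -> perp d1 d2 ->
  pcadj R v (padd v d1) -> pcadj R v (padd v d2) -> pc_corner R (padd v d1) ->
  pcadj R (padd v d1) (padd (padd v d1) (pneg d2)).
Proof.
  intros Nc U1 U2 P12 H1 H2 Hu.
  assert (Hback : pcadj R (padd v d1) (padd (padd v d1) (pneg d1))).
  { rewrite padd_pneg; apply pcadj_sym; exact H1. }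
  destruct (pc_corner_perp_nbr R _ _ Hu Hback) as (b & Ub & Pb & Hb).
  destruct (perp_unit_cases b d2 (pneg d1) Ub U2 (unit_vec_pneg d1 U1) (perp_sym _ _ Pb)
              (perp_pneg_r _ _ (perp_sym _ _ P12))) as [-> | ->]; [exfalso | exact Hb].
  destruct (pcadj_crossing_opp R _ _ H1) as (C0 & C1 & O1).
  destruct (pcadj_crossing_opp R _ _ H2) as (_ & C2 & O2).
  destruct (pcadj_crossing_opp R _ _ Hb) as (_ & C12 & O12).
  exact (Nc (celtic_of_three_sides R v d1 d2 U1 U2 P12 C0 C1 C2 C12 O1 O2 O12)).
Qed.

(* 2x + y is not constant along either diagonal direction (1,1), (1,-1). *)
Definition height (p : pt) : Z := 2 * fst p + snd p.

Lemma height_stair v d1 d2 : unit_vec d1 -> unit_vec d2 -> perp d1 d2 ->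
  height v < height (padd (padd v d1) (pneg d2)) \/
  height v < height (padd (padd v d2) (pneg d1)).
Proof.
  intros U1 U2 P12; destruct v as [x y]; unfold height, padd, pneg.
  destruct_unit_vecs; unfold perp in P12; cbn [fst snd] in *; lia.
Qed.

Lemma exists_argmax (g : nat -> Z) (k : nat) : (0 < k)%nat ->
  exists i, (i < k)%nat /\ forall j, (j < k)%nat -> g j <= g i.
Proof.
  induction k as [| k IH]; intros Hk; [lia |].
  destruct (Nat.eq_dec k 0) as [-> | Hk0].
  - exists 0%nat; split; [lia |]; intros j Hj; replace j with 0%nat by lia; lia.
  - destruct (IH ltac:(lia)) as (i & Hi & Hmax).
    destruct (Z_le_gt_dec (g k) (g i)) as [Le | Gt].
    + exists i; split; [lia |]; intros j Hj.
      destruct (Nat.eq_dec j k) as [-> | Hjk]; [exact Le | apply Hmax; lia].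
    + exists k; split; [lia |]; intros j Hj.
      destruct (Nat.eq_dec j k) as [-> | Hjk]; [lia |].
      specialize (Hmax j ltac:(lia)); lia.
Qed.

Lemma pc_closed_set_has_non_corner R (k : nat) (f : nat -> pt) : ~ celtic R -> (0 < k)%nat ->
  (forall i w, (i < k)%nat -> pcadj R (f i) w -> exists j, (j < k)%nat /\ w = f j) ->
  exists i, (i < k)%nat /\ ~ pc_corner R (f i).
Proof.
  intros Nc Hk Hclosed; apply NNPP; intros Hno.
  assert (Hcorner : forall i, (i < k)%nat -> pc_corner R (f i)).
  { intros i Hi; apply NNPP; intros Hi'; apply Hno; exists i; auto. }
  destruct (exists_argmax (fun j => height (f j)) k Hk) as (i & Hi & Hmax).
  assert (Hstair : forall d d', unit_vec d -> unit_vec d' -> perp d d' ->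
            pcadj R (f i) (padd (f i) d) -> pcadj R (f i) (padd (f i) d') ->
            height (padd (padd (f i) d) (pneg d')) <= height (f i)).
  { intros d d' Ud Ud' P Hd Hd'.
    destruct (Hclosed i _ Hi Hd) as (j & Hj & Ej).
    assert (Hst : pcadj R (padd (f i) d) (padd (padd (f i) d) (pneg d'))).
    { apply (pc_corner_stair R _ d d'); auto; rewrite Ej; auto. }
    destruct (Hclosed j (padd (padd (f i) d) (pneg d')) Hj) as (l & Hl & El).
    { rewrite <- Ej; exact Hst. }
    rewrite El; exact (Hmax l Hl). }
  destruct (Hcorner i Hi) as (d1 & d2 & U1 & U2 & P12 & H1 & H2 & _).
  pose proof (Hstair d1 d2 U1 U2 P12 H1 H2) as S1.
  pose proof (Hstair d2 d1 U2 U1 (perp_sym _ _ P12) H2 H1) as S2.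
  destruct (height_stair (f i) d1 d2 U1 U2 P12); lia.
Qed.

Theorem lemma3p8 (R : lattice_diagram) :
  (forall a b : pt, problem R a -> problem R b -> cadj R a b -> ~ pcadj R a b ->
     ~ bad_nbr R a b /\ ~ bad_nbr R b a /\ xover R a = xover R b) /\
  (~ celtic R ->
     pc_maxdeg2 R /\ pc_deleted_square_free R /\
     (forall (k : nat) (f : nat -> pt), pc_cycle_component R k f ->
        exists i, (i < k)%nat /\ ~ pc_corner R (f i))).
Proof.
  split; [exact (cadj_not_pcadj R) | intros Nc].
  split; [exact (pc_maxdeg2_of_not_celtic R Nc) |].
  split; [exact (pc_deleted_square_free_of_not_celtic R Nc) |].
  intros k f (Hk & _ & _ & _ & Hclosed & _).
  apply (pc_closed_set_has_non_corner R k f Nc); [lia | exact Hclosed].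
Qed.
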